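(* Let $(B,\omega)$ be a finite rank, perfectly ordered, well-telescoped Bratteli diagram, with associated bijection $\sigma:\widetilde V\to\overline V$, and let $\mathcal H$ be its associated graph. (1) If $B$ is simple, then $\mathcal H$ is strongly connected. (2) If $B$ belongs to the class $\mathcal A$, then $\mathcal H$ is weakly connected (for any two vertices $t,t'$ there is a directed path from $t$ to $t'$ or from $t'$ to $t$).
   Context: A Bratteli diagram $B$ has levels $V_n$ ($V_0=\{v_0\}$) and edge sets $E_n$ from $V_{n-1}$ to $V_n$ with source/range maps $s,r$; $X_B$ is its path space; standing assumption: $B$ aperiodic. Incidence matrix $F_n=(f^{(n)}_{v,w})_{v\in V_{n+1},w\in V_n}$: number of edges from $w$ to $v$. $B$ is simple if for every $n$ there is $m>n$ with every vertex of $V_n$ connected by a path to every vertex of $V_m$. An ordering $\omega$ is a linear order on each $r^{-1}(v)$; maximal/minimal paths, Vershik map $\varphi_\omega$ and perfectness are as usual (a perfect ordering is one admitting a Vershik map, i.e. a homeomorphism extending the successor map and sending maximal paths onto minimal paths). When $V_n=V$ for all $n\ge1$, $w(v,m,n)$ ($v\in V_n$, $1\le m<n$) is the word of sources (in $V$) of the paths from level $m$ to $v$ listed in increasing lexicographic order. A path is vertical if it passes through the same vertex at every level $\ge1$. A perfectly ordered finite rank diagram $(B,\omega)$ of rank $d$ is well-telescoped if: (i) $|r^{-1}(v)|\ge2$ for all $v\ne v_0$; (ii) $V_n=V$ for all $n\ge1$ with $|V|=d$; (iii) all $\omega$-maximal and $\omega$-minimal paths are vertical; $\widetilde V$ ($\overline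 V$) denotes the set of vertices through which the maximal (minimal) paths pass and $M_{\tilde v}$ ($m_{\bar v}$) the maximal (minimal) path through $\tilde v\in\widetilde V$ ($\bar v\in\overline V$); (iv) for each $w\in V$ there are $\tilde v(w)\in\widetilde V$, $\bar v(w)\in\overline V$ such that for every $n\ge2$ the maximal edge of $r^{-1}(w)$, $w\in V_n$, has source $\tilde v(w)$ and the minimal edge has source $\bar v(w)$; (v) with $\sigma:\widetilde V\to\overline V$ the bijection defined by $\varphi_\omega(M_{\tilde v})=m_{\sigma(\tilde v)}$, whenever a word $\tilde v\bar v$ with $\tilde v\in\widetilde V$, $\bar v\in\overline V$ occurs as a subword of some $w(u,m,n)$ with $n>m\ge1$, then $\bar v=\sigma(\tilde v)$. Associated graph: $W_{\tilde v}=\{w\in V:\tilde v(w)=\tilde v\}$, $W'_{\bar v}=\{w\in V:\bar v(w)=\bar v\}$, $[\bar v,\tilde v]=W'_{\bar v}\cap W_{\tilde v}$. $\mathcal H$ is the directed graph with vertex set $\{[\bar v,\tilde v]:[\bar v,\tilde v]\ne\emptyset\}$ and a directed edge from $[\bar v,\tilde v]$ to $[\bar v_1,\tilde v_1]$ iff $\sigma(\tilde v)=\bar v_1$ (loops allowed). Class $\mathcal A$: diagrams with, for all $n\ge1$, $F_n$ of block lower-triangular form with diagonal blocks $A^{(1)}_n,\dots,A^{(k)}_n,C_n$ and last block row $(B^{(1)}_n,\dots,B^{(k)}_n,C_n)$, all other blocks zero, where each $A^{(i)}_n$ is $d_i\times d_i$ with $d_i$ independent of $n$, $C_n$ has size independent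 of $n$, all $A^{(i)}_n,B^{(i)}_n,C_n$ are strictly positive, and some fixed row in the last block row is strictly positive for every $n$; such a diagram is said to have $k$ minimal components. *)

From mathcomp Require Import all_boot.
Set Implicit Arguments.
Unset Strict Implicit.
Unset Printing Implicit Defensive.

(* Bratteli diagrams with V_n = V for all n >= 1 (V_0 = {v0}).         *)
(* edge n is the edge set E_n (from level n-1 to level n), n >= 1;    *)
(* edge 0 is unused.  src / rng are the source / range maps; for      *)
(* n = 1 every edge has source the root v0, so src on edge 1 is        *)
(* irrelevant and never used.                                          *)
Record bratteli (V : finType) := Bratteli {
  edge : nat -> finType;
  src : forall n, edge n -> V;
  rng : forall n, edge n -> V
}.
Arguments src {V} b {n} _.
Arguments rng {V} b {n} _.

Section Diagram.
Variables (V : finType) (B : bratteli V).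

(* infinite paths: x n is an edge of E_{n+1} *)
Definition path := forall n : nat, edge B n.+1.
Definition is_path (x : path) := forall n, rng B (x n) = src B (x n.+1).
Definition XB := {x : path | is_path x}.

Definition tail_equiv (x y : XB) :=
  exists N, forall n, N <= n -> sval x n = sval y n.
Definition aperiodic :=
  forall (x : XB) (k : nat), exists f : 'I_k -> XB,
    injective f /\ forall i, tail_equiv x (f i).

(* finite paths from level m to vertex u at level n (m < n):          *)
(* p k in E_k for m < k <= n (other values of p are irrelevant).      *)
Definition finpath (m n : nat) (u : V) (p : forall k, edge B k) :=
  (forall k, m < k < n -> rng B (p k) = src B (p k.+1)) /\ rng B (p n) = u.

Definition simple :=
  forall n, exists m, n < m /\
    forall w v : V, exists p, finpath n m v p /\ (n = 0 \/ src B (p n.+1) = w).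

(* incidence matrix entry f^{(n)}_{v,w}: number of edges from w in V_n *)
(* to v in V_{n+1} *)
Definition incid (n : nat) (v w : V) : nat :=
  #|[set e : edge B n.+1 | (src B e == w) && (rng B e == v)]|.

(* class A: for n >= 1, the vertices of V_n are labelled by blocks     *)
(* 0..k-1 (the A^{(i)} blocks) and k (the C block), block sizes being   *)
(* independent of n, and F_n has the prescribed block form.            *)
Definition classA :=
  exists (k : nat) (lab : nat -> V -> 'I_k.+1),
    (forall n (i : 'I_k.+1), 1 <= n ->
        #|[set v | lab n v == i]| = #|[set v | lab 1 v == i]|) /\
    (forall n, 1 <= n -> forall v w : V,
        (val (lab n.+1 v) < k -> (0 < incid n v w) = (lab n w == lab n.+1 v)) /\
        (val (lab n.+1 v) = k -> 0 < incid n v w)) /\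
    (exists v : V, val (lab 1 v) = k).

(* Orderings.  An ordering is given by a rank function rk, injective  *)
(* on each fiber r^{-1}(v); the linear order on r^{-1}(v) is           *)
(* e < e' iff rk e < rk e'.                                           *)
Variable rk : forall n, edge B n -> nat.

Definition is_ordering :=
  forall n, 1 <= n -> forall e e' : edge B n,
    rng B e = rng B e' -> rk e = rk e' -> e = e'.

Definition emax n (e : edge B n) :=
  forall e' : edge B n, rng B e' = rng B e -> rk e' <= rk e.
Definition emin n (e : edge B n) :=
  forall e' : edge B n, rng B e' = rng B e -> rk e <= rk e'.

Definition pmax (x : XB) := forall n, emax (sval x n).
Definition pmin (x : XB) := forall n, emin (sval x n).

Definition succ_edge n (e e' : edge B n) :=
  rng B e' = rng B e /\ rk e < rk e' /\
  forall e'' : edge B n, rng B e'' = rng B e -> rk e < rk e'' -> rk e' <= rk e''.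

Definition succ_path (x y : XB) :=
  exists k, (forall j, j < k -> emax (sval x j)) /\ ~ emax (sval x k) /\
    succ_edge (sval x k) (sval y k) /\
    (forall j, k < j -> sval y j = sval x j) /\
    (forall j, j < k -> emin (sval y j)).

Definition continuous (f : XB -> XB) :=
  forall (x : XB) (N : nat), exists M, forall y : XB,
    (forall j, j < M -> sval y j = sval x j) ->
    forall j, j < N -> sval (f y) j = sval (f x) j.

Definition homeomorphism (f : XB -> XB) :=
  continuous f /\ exists g : XB -> XB,
    continuous g /\ (forall x, g (f x) = x) /\ (forall y, f (g y) = y).

Definition is_vershik (phi : XB -> XB) :=
  homeomorphism phi /\
  (forall x, ~ pmax x -> succ_path x (phi x)) /\
  (forall x, pmax x -> pmin (phi x)) /\
  (forall y, pmin y -> exists x, pmax x /\ phi x = y).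

Definition perfect := exists phi, is_vershik phi.

Definition passes (x : XB) (v : V) := exists n, rng B (sval x n) = v.
Definition vertical (x : XB) := forall n, rng B (sval x n) = rng B (sval x 0).

Definition inTV (v : V) := exists x, pmax x /\ passes x v.
Definition inBV (v : V) := exists x, pmin x /\ passes x v.

Variable phi : XB -> XB.

(* sigma(tv) = bv, i.e. phi(M_tv) = m_bv *)
Definition sigma (tv bv : V) := exists x, pmax x /\ passes x tv /\ passes (phi x) bv.

Definition lex_lt (m n : nat) (p q : forall k, edge B k) :=
  exists k, m < k <= n /\ rk (p k) < rk (q k) /\
    forall j, k < j <= n -> p j = q j.

(* the two-letter word a b is a subword (factor) of w(u,m,n) *)
Definition occurs2 (u : V) (m n : nat) (a b : V) :=
  exists p q, finpath m n u p /\ finpath m n u q /\ lex_lt m n p q /\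
    (forall r, finpath m n u r -> ~ (lex_lt m n p r /\ lex_lt m n r q)) /\
    src B (p m.+1) = a /\ src B (q m.+1) = b.

Definition tv_of (w tv : V) :=
  forall n, 2 <= n -> forall e : edge B n, rng B e = w -> emax e -> src B e = tv.
Definition bv_of (w bv : V) :=
  forall n, 2 <= n -> forall e : edge B n, rng B e = w -> emin e -> src B e = bv.

Definition well_telescoped :=
  (forall n, 1 <= n -> forall v : V, 2 <= #|[set e : edge B n | rng B e == v]|) /\
  (* (ii) is built into the representation *)
  (forall x, pmax x -> vertical x) /\ (forall x, pmin x -> vertical x) /\
  (forall w : V, exists tv bv, inTV tv /\ inBV bv /\ tv_of w tv /\ bv_of w bv) /\
  (forall (u : V) m n, 1 <= m -> m < n -> forall tv bv, inTV tv -> inBV bv ->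
     occurs2 u m n tv bv -> sigma tv bv).

(* The associated graph H: vertices are pairs (bv, tv) with [bv,tv] nonempty *)
Definition cell (bv tv w : V) := tv_of w tv /\ bv_of w bv.
Definition Hvert (t : V * V) :=
  inBV t.1 /\ inTV t.2 /\ exists w, cell t.1 t.2 w.
Definition Hedge (t t' : V * V) := sigma t.2 t'.1.

Inductive Hreach : V * V -> V * V -> Prop :=
| Hreach_refl t : Hvert t -> Hreach t t
| Hreach_step t t' t'' : Hvert t -> Hvert t' -> Hedge t t' -> Hreach t' t'' ->
    Hreach t t''.

Definition strongly_connected :=
  forall t t', Hvert t -> Hvert t' -> Hreach t t'.
Definition weakly_connected :=
  forall t t', Hvert t -> Hvert t' -> Hreach t t' \/ Hreach t' t.

End Diagram.

From Pilot Require Import Defs.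
From mathcomp Require Import all_boot zify.
From Stdlib Require Import IndefiniteDescription.
Set Implicit Arguments.
Unset Strict Implicit.
Unset Printing Implicit Defensive.

(* Write [w] for the H-vertex [bv(w), tv(w)]; every vertex of H has this form,
   and there is an H-edge [a] -> [b] exactly when sigma(tv(a)) = bv(b).
   The key fact (succ_sigma_eventually) is that beyond some level K, whenever
   e' is the successor of e in a fiber, sigma(tv(src e)) = bv(src e').  It
   comes from the Vershik map: splice e into the maximal path through
   tv(src e) at a high level; the successor of the spliced path is e' at that
   level and minimal below, so it starts at bv(src e'); by continuity of phi
   it starts where phi of the maximal path does.
   Inducting along fibers, [src e0] reaches [src e] whenever e0 <= e lie in a
   fiber beyond level K, and then every path from level L > K up to a vertex
   y passes through vertices lying between bv(y) and tv(y) in H.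
   (2) In class A a vertex y of the last block receives edges from all
   vertices, so [w] and [w'] are comparable through the fiber of y.
   (1) In a simple diagram, paths from w and w' reach the sources of two
   edges a < b of one fiber, giving [w] -> [tv(src a)] -> [bv(src b)] -> [w']. *)

Section Diagram.
Variables (V : finType) (B : bratteli V).

Definition set_edge (x : Defs.path B) (i : nat) (a : edge B i.+1) : Defs.path B :=
  fun j => if i =P j is ReflectT E then eq_rect i (fun k => edge B k.+1) a j E
           else x j.

Lemma set_edge_same x i (a : edge B i.+1) : set_edge x a i = a.
Proof. by rewrite /set_edge; case: eqP => // E; rewrite (eq_irrelevance E erefl). Qed.

Lemma set_edge_other x i (a : edge B i.+1) j : i != j -> set_edge x a j = x j.
Proof. by rewrite /set_edge; case: eqP. Qed.

Definition out_edges :=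
  forall n, 0 < n -> forall w : V, exists e : edge B n.+1, src B e = w.

(* Every level n+1 >= 2 has a vertex receiving an edge from each vertex of
   level n; this is how the strictly positive row of class A is used. *)
Definition hub_levels :=
  forall n, 0 < n -> exists y : V,
    forall w : V, exists e : edge B n.+1, src B e = w /\ rng B e = y.

Lemma hub_out_edges : hub_levels -> out_edges.
Proof. by move=> hub n n_gt0 w; have [y /(_ w) [e [<- _]]] := hub n n_gt0; exists e. Qed.

Lemma simple_out_edges : simple B -> out_edges.
Proof.
move=> simpleB n n_gt0 w; have [_ [_ /(_ w w) [p [_ [n0|p_w]]]]] := simpleB n.
  by rewrite n0 in n_gt0.
by exists (p n.+1).
Qed.

(* The vertices of the last block of a class A diagram are hubs. *)
Lemma classA_hub_levels : classA B -> hub_levels.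
Proof.
move=> [k [lab [block_size [incidence [v0 v0_last]]]]] n n_gt0.
have /card_gt0P [y] : 0 < #|[set v | lab n.+1 v == ord_max]|.
  by rewrite block_size //; apply/card_gt0P; exists v0; rewrite inE; apply/eqP/val_inj.
rewrite inE => /eqP y_last.
exists y => w; have := (incidence n n_gt0 y w).2; rewrite y_last => /(_ erefl).
by case/card_gt0P=> e; rewrite inE => /andP [/eqP e_src /eqP e_rng]; exists e.
Qed.

Lemma extend_path (p : Defs.path B) N : out_edges -> 0 < N ->
  (forall j, j.+1 < N -> rng B (p j) = src B (p j.+1)) ->
  exists x : XB B, forall j, j < N -> sval x j = p j.
Proof.
move=> out N_gt0 p_path.
pose up j w := odflt (p j) [pick e : edge B j.+1 | src B e == w].
have up_src j w : 0 < j -> src B (up j w) = w.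
  move=> j_gt0; rewrite /up; case: pickP => [e /eqP //| none].
  by have [e e_w] := out j j_gt0 w; move: (none e); rewrite e_w eqxx.
pose fix top t := if t is t'.+1 then rng B (up (N + t') (top t')) else rng B (p N.-1).
pose x j := if j < N then p j else up j (top (j - N)).
have x_path : is_path x.
  move=> j; rewrite /x /=; case: (ltngtP j.+1 N) => [jN|Nj|jN].
  - exact: p_path.
  - by rewrite up_src // subSn //= subnKC.
  - by rewrite up_src // {2}jN subnn /= -jN.
by exists (exist _ x x_path) => j jN; rewrite /= /x jN.
Qed.

Lemma Hreach_trans (rk : forall n, edge B n -> nat) (phi : XB B -> XB B) (s t u : V * V) :
  Hreach rk phi s t -> Hreach rk phi t u -> Hreach rk phi s u.
Proof. by elim=> // a b c va vb ab _ IH /IH; apply: Hreach_step. Qed.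

Variable rk : forall n, edge B n -> nat.
Hypothesis rk_inj : is_ordering rk.
Hypothesis fiber_two : forall n, 1 <= n -> forall v : V,
  2 <= #|[set e : edge B n | rng B e == v]|.

Lemma fiber_rk_inj n (e e' : edge B n.+1) :
  rng B e = rng B e' -> rk e = rk e' -> e = e'.
Proof. exact: rk_inj. Qed.

Lemma fiber_rank_pair n (v : V) : 0 < n ->
  exists a b : edge B n, [/\ rng B a = v, rng B b = v & rk a < rk b].
Proof.
move=> n_gt0; have /card_gt1P [a [b]] := fiber_two n_gt0 v.
rewrite !inE => -[/eqP a_v /eqP b_v a_b].
case: (ltngtP (rk a) (rk b)) => [ab|ba|ab]; first by exists a, b.
  by exists b, a.
by move: a_b; rewrite (rk_inj n_gt0 (etrans a_v (esym b_v)) ab) eqxx.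
Qed.

Lemma max_edge_exists n (v : V) : 0 < n -> exists e : edge B n, rng B e = v /\ emax rk e.
Proof.
move=> n_gt0; have [e0 [_ [e0_v _ _]]] := fiber_rank_pair v n_gt0.
case: (@arg_maxnP _ e0 (fun e => rng B e == v) (@rk n)); first exact/eqP.
by move=> e /eqP e_v e_max; exists e; split => // e' e'_v; apply/e_max/eqP; rewrite e'_v.
Qed.

Lemma min_edge_exists n (v : V) : 0 < n -> exists e : edge B n, rng B e = v /\ emin rk e.
Proof.
move=> n_gt0; have [e0 [_ [e0_v _ _]]] := fiber_rank_pair v n_gt0.
case: (@arg_minnP _ e0 (fun e => rng B e == v) (@rk n)); first exact/eqP.
by move=> e /eqP e_v e_min; exists e; split => // e' e'_v; apply/e_min/eqP; rewrite e'_v.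
Qed.

Lemma emax_uniq n (e e' : edge B n.+1) :
  rng B e = rng B e' -> emax rk e -> emax rk e' -> e = e'.
Proof.
move=> ee' e_max e'_max; apply: fiber_rk_inj => //.
by apply/eqP; rewrite eqn_leq e'_max // e_max.
Qed.

Lemma emin_uniq n (e e' : edge B n.+1) :
  rng B e = rng B e' -> emin rk e -> emin rk e' -> e = e'.
Proof.
move=> ee' e_min e'_min; apply: fiber_rk_inj => //.
by apply/eqP; rewrite eqn_leq e_min // e'_min.
Qed.

Lemma succ_edge_uniq n (e a b : edge B n.+1) :
  succ_edge rk e a -> succ_edge rk e b -> a = b.
Proof.
move=> [a_rng [ea a_least]] [b_rng [eb b_least]].
apply: fiber_rk_inj; first by rewrite a_rng b_rng.
by apply/eqP; rewrite eqn_leq a_least // b_least.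
Qed.

Lemma pred_edge_exists n (e0 e : edge B n) : rng B e0 = rng B e -> rk e0 < rk e ->
  exists p, rk e0 <= rk p /\ succ_edge rk p e.
Proof.
move=> e0e lt_e0e; pose below (x : edge B n) := (rng B x == rng B e) && (rk x < rk e).
case: (@arg_maxnP _ e0 below (@rk n)); first by rewrite /below e0e eqxx lt_e0e.
move=> p /andP [/eqP p_rng lt_pe] p_max; exists p; split.
  by apply: p_max; rewrite /below e0e eqxx lt_e0e.
split=> //; split=> // e'' e''_rng lt_pe''; rewrite leqNgt; apply/negP => lt_e''e.
have := p_max e''; rewrite /below e''_rng p_rng eqxx lt_e''e => /(_ isT) /=.
by rewrite leqNgt lt_pe''.
Qed.

Lemma succ_not_max n (e e' : edge B n) : succ_edge rk e e' -> ~ emax rk e.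
Proof. by move=> [e'_rng [lt_ee' _]] /(_ e' e'_rng); rewrite leqNgt lt_ee'. Qed.

Lemma fiber_lt_ind n (R : edge B n.+1 -> edge B n.+1 -> Prop) :
  (forall p e, succ_edge rk p e -> R p e) -> (forall a b c, R a b -> R b c -> R a c) ->
  forall e0 e, rng B e0 = rng B e -> rk e0 < rk e -> R e0 e.
Proof.
move=> R_succ R_trans e0 e; elim: {e}(rk e).+1 {-2}e (ltnSn (rk e)) => // N IH e.
rewrite ltnS => le_eN e0e lt_e0e.
have [p [le_e0p p_e]] := pred_edge_exists e0e lt_e0e; have [p_rng [lt_pe _]] := p_e.
move: le_e0p; rewrite leq_eqVlt => /orP [/eqP e0p|lt_e0p].
  by rewrite (fiber_rk_inj (etrans e0e p_rng) e0p); apply: R_succ.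
apply: R_trans (R_succ _ _ p_e); apply: IH lt_e0p; last by rewrite e0e p_rng.
exact: leq_trans lt_pe le_eN.
Qed.

Lemma succ_path_at (x y : XB B) k : succ_path rk x y ->
  (forall j, j < k -> emax rk (sval x j)) -> ~ emax rk (sval x k) ->
  succ_edge rk (sval x k) (sval y k) /\ forall j, j < k -> emin rk (sval y j).
Proof.
move=> [k' [below_max [not_max [y_succ [_ y_min]]]]] x_max x_not_max.
case: (ltngtP k' k) => [lt_k'k|lt_kk'|eq_k'k].
- by case: not_max; apply: x_max.
- by case: x_not_max; apply: below_max.
- by subst k'.
Qed.

(* A path whose edges up to level h+1 (h >= 1) are minimal, whose edge at
   level h+1 comes from bv, and with bv(bv) = bv, starts at bv: minimal edges
   into bv come from bv. *)
Lemma min_descent (y : XB B) h (bv : V) : 0 < h ->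
  (forall j, j < h.+1 -> emin rk (sval y j)) ->
  bv_of rk (rng B (sval y h)) bv -> bv_of rk bv bv -> rng B (sval y 0) = bv.
Proof.
move=> h_gt0 y_min top_bv bv_bv.
have src_bv d j : j + d = h -> 0 < j -> src B (sval y j) = bv.
  elim: d j => [|d IH] j jd j_gt0.
    by rewrite addn0 in jd; subst j; apply: (top_bv h.+1 h_gt0 _ erefl (y_min h _)).
  apply: (bv_bv j.+1 j_gt0 (sval y j)); last by apply: y_min; lia.
  by rewrite (svalP y j); apply: IH; lia.
by rewrite (svalP y 0); apply: (src_bv h.-1); lia.
Qed.

Hypothesis max_vertical : forall x, pmax rk x -> vertical x.
Hypothesis min_vertical : forall x, pmin rk x -> vertical x.

Lemma max_path_through tv : inTV rk tv ->
  exists M : XB B, pmax rk M /\ forall j, rng B (sval M j) = tv.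
Proof.
move=> [M [M_max [n M_n]]]; exists M; split=> // j.
by rewrite -M_n (max_vertical M_max j) (max_vertical M_max n).
Qed.

Lemma min_path_through bv : inBV rk bv ->
  exists M : XB B, pmin rk M /\ forall j, rng B (sval M j) = bv.
Proof.
move=> [M [M_min [n M_n]]]; exists M; split=> // j.
by rewrite -M_n (min_vertical M_min j) (min_vertical M_min n).
Qed.

Lemma tv_of_self tv : inTV rk tv -> tv_of rk tv tv.
Proof.
move=> /max_path_through [M [M_max M_tv]] [|[|i]] // _ e e_tv e_max.
have -> : e = sval M i.+1 by apply: emax_uniq e_max (M_max i.+1); rewrite e_tv M_tv.
by rewrite -(svalP M i) M_tv.
Qed.

Lemma bv_of_self bv : inBV rk bv -> bv_of rk bv bv.
Proof.
move=> /min_path_through [M [M_min M_bv]] [|[|i]] // _ e e_bv e_min.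
have -> : e = sval M i.+1 by apply: emin_uniq e_min (M_min i.+1); rewrite e_bv M_bv.
by rewrite -(svalP M i) M_bv.
Qed.

Lemma choose_labels :
  (forall w : V, exists tv bv,
     inTV rk tv /\ inBV rk bv /\ tv_of rk w tv /\ bv_of rk w bv) ->
  exists tvf bvf : V -> V,
    (forall w, inTV rk (tvf w) /\ tv_of rk w (tvf w)) /\
    (forall w, inBV rk (bvf w) /\ bv_of rk w (bvf w)).
Proof.
move=> labels.
have [tvf tvf_spec] : exists tvf : V -> V, forall w, inTV rk (tvf w) /\ tv_of rk w (tvf w).
  apply: (functional_choice (fun w tv => inTV rk tv /\ tv_of rk w tv)) => w.
  by have [tv [_ [tv_in [_ [w_tv _]]]]] := labels w; exists tv.
have [bvf bvf_spec] : exists bvf : V -> V, forall w, inBV rk (bvf w) /\ bv_of rk w (bvf w).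
  apply: (functional_choice (fun w bv => inBV rk bv /\ bv_of rk w bv)) => w.
  by have [_ [bv [_ [bv_in [_ w_bv]]]]] := labels w; exists bv.
by exists tvf, bvf.
Qed.

Variables tvf bvf : V -> V.
Hypothesis tvf_spec : forall w, inTV rk (tvf w) /\ tv_of rk w (tvf w).
Hypothesis bvf_spec : forall w, inBV rk (bvf w) /\ bv_of rk w (bvf w).

Lemma tv_of_uniq w tv : tv_of rk w tv -> tv = tvf w.
Proof.
move=> w_tv; have [e [e_w e_max]] := max_edge_exists w (isT : 0 < 2).
by rewrite -(w_tv 2 isT e e_w e_max) -((tvf_spec w).2 2 isT e e_w e_max).
Qed.

Lemma bv_of_uniq w bv : bv_of rk w bv -> bv = bvf w.
Proof.
move=> w_bv; have [e [e_w e_min]] := min_edge_exists w (isT : 0 < 2).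
by rewrite -(w_bv 2 isT e e_w e_min) -((bvf_spec w).2 2 isT e e_w e_min).
Qed.

Lemma tvf_idem w : tvf (tvf w) = tvf w.
Proof. by rewrite -(tv_of_uniq (tv_of_self (tvf_spec w).1)). Qed.

Lemma bvf_idem w : bvf (bvf w) = bvf w.
Proof. by rewrite -(bv_of_uniq (bv_of_self (bvf_spec w).1)). Qed.

Definition cell_of (w : V) : V * V := (bvf w, tvf w).

Lemma cell_of_Hvert w : Hvert rk (cell_of w).
Proof.
split; first exact: (bvf_spec w).1; split; first exact: (tvf_spec w).1.
by exists w; split; [exact: (tvf_spec w).2 | exact: (bvf_spec w).2].
Qed.

Lemma Hvert_cell_of t : Hvert rk t -> exists w, t = cell_of w.
Proof.
case: t => bv tv [_ [_ [w [w_tv w_bv]]]]; exists w.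
by rewrite /cell_of -(tv_of_uniq w_tv) -(bv_of_uniq w_bv).
Qed.

Variable phi : XB B -> XB B.

Section SuccessorSigma.
Hypothesis phi_succ : forall x, ~ pmax rk x -> succ_path rk x (phi x).
Hypothesis phi_cont : continuous phi.
Hypothesis out : out_edges.

(* Core step: let e' be the successor of e at level h+2 and M the maximal
   path through tv(src e).  Replacing the edges of M at levels h+1, h+2 by
   the maximal edge into src e and by e itself, and extending upwards, gives
   a path x whose successor phi x is e' at level h+2 and minimal below;
   hence phi x starts at bv(src e'). *)
Lemma spliced_successor (M : XB B) h (e e' : edge B h.+2) :
  pmax rk M -> (forall j, rng B (sval M j) = tvf (src B e)) -> 0 < h ->
  succ_edge rk e e' ->
  exists2 x : XB B, (forall j, j < h -> sval x j = sval M j) &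
                    rng B (sval (phi x) 0) = bvf (src B e').
Proof.
move=> M_max M_tv h_gt0 ee'.
have [g [g_rng g_max]] := max_edge_exists (src B e) (isT : 0 < h.+1).
have g_src : src B g = tvf (src B e) := (tvf_spec _).2 h.+1 h_gt0 g g_rng g_max.
pose p := set_edge (set_edge (sval M) e) g.
have p_lo j : j < h -> p j = sval M j by move=> lt_jh; rewrite /p !set_edge_other //; lia.
have p_h : p h = g by rewrite /p set_edge_same.
have p_h1 : p h.+1 = e by rewrite /p set_edge_other ?set_edge_same //; lia.
have p_path j : j.+1 < h.+2 -> rng B (p j) = src B (p j.+1).
  move=> lt_jh; case: (ltngtP j.+1 h) => [lt_j1h|lt_hj1|eq_j1h].
  - by rewrite !p_lo ?(svalP M j) //; lia.
  - have -> : j = h by lia.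
    by rewrite p_h p_h1 g_rng.
  - by subst h; rewrite p_lo // p_h M_tv g_src.
have [x x_p] := extend_path out (isT : 0 < h.+2) p_path.
have x_max j : j < h.+1 -> emax rk (sval x j).
  rewrite ltnS leq_eqVlt => /orP [/eqP ->|lt_jh]; first by rewrite x_p // p_h.
  by rewrite x_p ?p_lo //; lia.
have x_h1 : sval x h.+1 = e by rewrite x_p // p_h1.
have x_not_max : ~ emax rk (sval x h.+1) by rewrite x_h1; apply: succ_not_max ee'.
have [y_succ y_min] :=
  succ_path_at (phi_succ (fun x_pmax => x_not_max (x_pmax h.+1))) x_max x_not_max.
have y_h1 : sval (phi x) h.+1 = e' by apply: succ_edge_uniq y_succ _; rewrite x_h1.
exists x => [j lt_jh|]; first by rewrite x_p ?p_lo //; lia.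
apply: min_descent h_gt0 y_min _ (bv_of_self (bvf_spec _).1).
by rewrite (svalP (phi x) h) y_h1; apply: (bvf_spec _).2.
Qed.

(* Continuity of phi at the maximal paths makes the core step uniform: beyond
   some level K, every successor pair e < e' gives sigma(tv(src e), bv(src e')). *)
Lemma succ_sigma_eventually : exists K, forall h (e e' : edge B h.+2),
  K <= h -> succ_edge rk e e' -> sigma rk phi (tvf (src B e)) (bvf (src B e')).
Proof.
have /functional_choice [K0 K0_spec] : forall w, exists K, exists M : XB B,
    [/\ pmax rk M, forall j, rng B (sval M j) = tvf w &
        forall y : XB B, (forall j, j < K -> sval y j = sval M j) ->
          sval (phi y) 0 = sval (phi M) 0].
  move=> w; have [M [M_max M_tv]] := max_path_through (tvf_spec w).1.
  have [K M_cont] := phi_cont M 1.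
  by exists K, M; split=> // y y_M; apply: M_cont y y_M 0 isT.
exists (\max_(w : V) K0 w).+1 => h e e' lt_Kh ee'.
have [M [M_max M_tv M_cont]] := K0_spec (src B e).
have [x x_M x_bv] := spliced_successor M_max M_tv (leq_ltn_trans (leq0n _) lt_Kh) ee'.
have x0_M0 : sval (phi x) 0 = sval (phi M) 0.
  apply: M_cont => j lt_j; apply: x_M; apply: leq_trans lt_j _.
  exact: leq_trans (leq_bigmax _) (ltnW lt_Kh).
exists M; split=> //; split; first by exists 0; apply: M_tv.
by exists 0; rewrite -x0_M0.
Qed.

End SuccessorSigma.

Definition reach (a b : V) := Hreach rk phi (cell_of a) (cell_of b).

Lemma reach_refl a : reach a a.
Proof. exact/Hreach_refl/cell_of_Hvert. Qed.

Lemma reach_trans a b c : reach a b -> reach b c -> reach a c.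
Proof. exact: Hreach_trans. Qed.

Lemma reach_sigma a b : sigma rk phi (tvf a) (bvf b) -> reach a b.
Proof.
by move=> ab; apply: Hreach_step (cell_of_Hvert a) (cell_of_Hvert b) ab (reach_refl b).
Qed.

Section Reachability.
Variable K : nat.
Hypothesis succ_sigma : forall h (e e' : edge B h.+2),
  K <= h -> succ_edge rk e e' -> sigma rk phi (tvf (src B e)) (bvf (src B e')).

Lemma reach_fiber_le h (e0 e : edge B h.+2) : K <= h -> rng B e0 = rng B e ->
  rk e0 <= rk e -> reach (src B e0) (src B e).
Proof.
move=> Kh e0e; rewrite leq_eqVlt => /orP [/eqP eq_rk|lt_rk].
  by rewrite (fiber_rk_inj e0e eq_rk); apply: reach_refl.
apply: (fiber_lt_ind (R := fun a b => reach (src B a) (src B b)) _ _ e0e lt_rk).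
  by move=> a b ab; apply/reach_sigma/succ_sigma.
by move=> a b c; apply: reach_trans.
Qed.

(* In particular bv(s) reaches tv(s), via the minimal and maximal edges into s. *)
Lemma reach_bottom_top (s : V) : reach (bvf s) (tvf s).
Proof.
have [em [em_s em_min]] := min_edge_exists s (isT : 0 < K.+2).
have [eM [eM_s eM_max]] := max_edge_exists s (isT : 0 < K.+2).
rewrite -((bvf_spec s).2 K.+2 isT _ em_s em_min) -((tvf_spec s).2 K.+2 isT _ eM_s eM_max).
by apply: reach_fiber_le (leqnn K) _ (em_min _ _); rewrite em_s eM_s.
Qed.

Lemma reach_fiber_lt h (e0 e : edge B h.+2) : K <= h -> rng B e0 = rng B e ->
  rk e0 < rk e -> reach (tvf (src B e0)) (bvf (src B e)).
Proof.
move=> Kh; apply: (fiber_lt_ind (R := fun a b => reach (tvf (src B a)) (bvf (src B b)))).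
  by move=> a b ab; apply: reach_sigma; rewrite tvf_idem bvf_idem; apply: succ_sigma.
by move=> a b c ab bc; apply: reach_trans ab (reach_trans (reach_bottom_top _) bc).
Qed.

Lemma reach_edge_source h (e : edge B h.+2) : K <= h ->
  reach (bvf (rng B e)) (src B e) /\ reach (src B e) (tvf (rng B e)).
Proof.
move=> Kh; have [em [em_e em_min]] := min_edge_exists (rng B e) (isT : 0 < h.+2).
have [eM [eM_e eM_max]] := max_edge_exists (rng B e) (isT : 0 < h.+2).
rewrite -((bvf_spec _).2 h.+2 isT _ em_e em_min) -((tvf_spec _).2 h.+2 isT _ eM_e eM_max).
split; apply: reach_fiber_le Kh _ _ => //; first by apply: em_min; rewrite em_e.
by apply: eM_max; rewrite eM_e.
Qed.

Lemma reach_edge_labels h (e : edge B h.+2) : K <= h ->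
  reach (bvf (rng B e)) (bvf (src B e)) /\ reach (tvf (src B e)) (tvf (rng B e)).
Proof.
move=> Kh; have [em [em_e em_min]] := min_edge_exists (rng B e) (isT : 0 < h.+2).
have [eM [eM_e eM_max]] := max_edge_exists (rng B e) (isT : 0 < h.+2).
have em_src := (bvf_spec _).2 h.+2 isT _ em_e em_min.
have eM_src := (tvf_spec _).2 h.+2 isT _ eM_e eM_max.
split.
- have := em_min e; rewrite em_e leq_eqVlt => /(_ erefl) /orP [/eqP eq_rk|lt_rk].
    by rewrite -(fiber_rk_inj em_e eq_rk) em_src em_e bvf_idem; apply: reach_refl.
  apply: reach_trans (reach_fiber_lt Kh em_e lt_rk).
  by have := reach_bottom_top (src B em); rewrite em_src bvf_idem.
- have := eM_max e; rewrite eM_e leq_eqVlt => /(_ erefl) /orP [/eqP eq_rk|lt_rk].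
    by rewrite (fiber_rk_inj (esym eM_e) eq_rk) eM_src eM_e tvf_idem; apply: reach_refl.
  apply: reach_trans (reach_fiber_lt Kh (esym eM_e) lt_rk) _.
  by have := reach_bottom_top (src B eM); rewrite eM_src tvf_idem.
Qed.

Lemma reach_along_path L n (y : V) (p : forall k, edge B k) : K < L < n ->
  finpath L n y p -> reach (bvf y) (src B (p L.+1)) /\ reach (src B (p L.+1)) (tvf y).
Proof.
elim: n y => [|n IH] y /andP [KL]; first by [].
rewrite ltnS leq_eqVlt => /orP [/eqP eq_Ln|lt_Ln] [p_path p_y].
  by subst n; clear IH; case: L KL p_path p_y => [//|h] KL _ <-; apply: reach_edge_source.
have p_sub : finpath L n (src B (p n.+1)) p.
  by split=> [k /andP [Lk kn]|]; apply: p_path; lia.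
have KLn : K < L < n by rewrite KL.
have [IHb IHt] := IH _ KLn p_sub.
have [h eq_n] : exists h, n = h.+1 by exists n.-1; lia.
subst n; have Kh : K <= h by lia.
have [lab_b lab_t] := reach_edge_labels (p h.+2) Kh.
rewrite p_y in lab_b lab_t.
by split; [apply: reach_trans lab_b IHb | apply: reach_trans IHt lab_t].
Qed.

Lemma hub_weakly_connected : hub_levels -> weakly_connected rk phi.
Proof.
move=> hub t t' /Hvert_cell_of [w ->] /Hvert_cell_of [w' ->].
have [y y_hub] := hub K.+1 isT.
have [e [<- e_y]] := y_hub w; have [e' [<- e'_y]] := y_hub w'.
have ee' : rng B e = rng B e' by rewrite e_y e'_y.
case: (leqP (rk e) (rk e')) => [le_ee'|/ltnW le_e'e].
  by left; apply: reach_fiber_le (leqnn K) ee' le_ee'.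
by right; apply: reach_fiber_le (leqnn K) (esym ee') le_e'e.
Qed.

(* Part (1): in a simple diagram, w reaches tv(src a) and bv(src b) reaches w'
   along paths from level K+1 to a fiber containing edges a < b. *)
Lemma simple_strongly_connected : simple B -> strongly_connected rk phi.
Proof.
move=> simpleB t t' /Hvert_cell_of [w ->] /Hvert_cell_of [w' ->].
have [[|m] [Km connect]] := simpleB K.+1; first by [].
have [a [b [a_w b_w lt_ab]]] := fiber_rank_pair w (isT : 0 < m.+2).
have [p [p_path [//|p_w]]] := connect w (src B a).
have [q [q_path [//|q_w]]] := connect w' (src B b).
have Kpath : K < K.+1 < m.+1 by rewrite ltnSn.
have [_ w_top] := reach_along_path Kpath p_path.
have [b_bot _] := reach_along_path Kpath q_path.
rewrite p_w in w_top; rewrite q_w in b_bot.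
apply: reach_trans w_top (reach_trans (reach_fiber_lt _ _ lt_ab) b_bot).
  by rewrite -ltnS ltnW.
by rewrite a_w b_w.
Qed.

End Reachability.

End Diagram.

Theorem mainTheorem8 (V : finType) (B : bratteli V)
    (rk : forall n, edge B n -> nat) (phi : XB B -> XB B) :
  aperiodic B -> is_ordering rk -> is_vershik rk phi ->
  well_telescoped rk phi ->
  (simple B -> strongly_connected rk phi) /\
  (classA B -> weakly_connected rk phi).
Proof.
move=> _ rk_inj [[phi_cont _] [phi_succ _]] [fiber_two [max_vert [min_vert [labels _]]]].
have [tvf [bvf [tvf_spec bvf_spec]]] := choose_labels labels.
have eventually := succ_sigma_eventually rk_inj fiber_two max_vert min_vert
  tvf_spec bvf_spec phi_succ phi_cont.
split=> [simpleB | classAB].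
- have [K succ_sigma] := eventually (simple_out_edges simpleB).
  exact: (simple_strongly_connected rk_inj fiber_two max_vert min_vert
    tvf_spec bvf_spec succ_sigma simpleB).
- have hubs := classA_hub_levels classAB.
  have [K succ_sigma] := eventually (hub_out_edges hubs).
  exact: (hub_weakly_connected rk_inj fiber_two tvf_spec bvf_spec succ_sigma hubs).
Qed.
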